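(* The set of ramification points of the map $X:\mathbb P^1\to\mathbb P^1$, $X(z)=z/(\gamma G(S(z)))$, is the set $\mathcal L$ of zeros of $\phi$ if $LM=2$, and is $\mathcal L\cup\{\infty\}$ if $LM>2$.
   Context: Let $G(z)=1+\sum_{k=1}^Mg_kz^k$ with complex coefficients, $g_M\neq0$, let $S(z)=\sum_{k=1}^Lks_kz^k$ with complex $s_k$, $s_L\ne0$, $LM>1$, and $\gamma\in\mathbb C\setminus\{0\}$. Let $\phi(z)=G(S(z))-zG'(S(z))S'(z)$, a polynomial of degree $LM$, and $\mathcal L$ its zero set. A point $z_0\in\mathbb P^1$ is a ramification point of $X$ if $X$ is not invertible in any neighbourhood of $z_0$, i.e. either $X-X(z_0)$ vanishes to order $>1$ at $z_0$, or $X$ has a pole of order $\ge2$ at $z_0$. *)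

From HB Require Import structures.
From mathcomp Require Import all_boot all_order all_algebra.
From mathcomp Require Import complex.
From mathcomp Require Import reals.
Set Implicit Arguments. Unset Strict Implicit. Unset Printing Implicit Defensive.
Import Order.TTheory GRing.Theory Num.Theory.
Local Open Scope ring_scope.

(* Points of P^1 over a field F: [Some z] is the finite point z, [None] is oo. *)
Definition P1 (F : Type) := option F.

(* Order of vanishing of the rational function p/q at a point of P^1
   (for p, q nonzero): at a finite z it is mult_z(p) - mult_z(q); at oo it is
   deg q - deg p.  Negative values mean a pole of that order. *)
Definition ord_at (F : fieldType) (a : P1 F) (p q : {poly F}) : int :=
  match a with
  | Some z => (mup z p)%:Z - (mup z q)%:Z
  | None => (size q)%:Z - (size p)%:Z
  end.

(* [a] is a ramification point of the rational map X = p/q (q <> 0):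
   either X - X(a) vanishes to order > 1 at a (X(a) being the finite value c
   with X - c = (p - c q)/q vanishing at a; X - c identically 0 counts as
   vanishing to infinite order), or X has a pole of order >= 2 at a. *)
Definition ramification_point (F : fieldType) (p q : {poly F}) (a : P1 F) : Prop :=
  (exists c : F, p - c *: q = 0 \/ 1 < ord_at a (p - c *: q) q)
  \/ (p != 0 /\ ord_at a p q <= -2).

(** Write [X = z/q] with [q = gamma G(S)], so that [q(0) = gamma <> 0] and
    [deg q = LM].  At a finite [z] with [q(z) <> 0], [X - X(z)] has numerator
    [z - c q] with [c = z/q(z)], which has a double root at [z] iff
    [1 = c q'(z)], i.e. iff [q(z) - z q'(z) = 0].  At a zero [z <> 0] of [q] the
    map has a pole, of order at least 2 iff [q'(z) = 0], which is again
    [q(z) - z q'(z) = 0].  By the chain rule [q - z q' = gamma phi].  At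
    infinity [X] vanishes to order [LM - 1], which exceeds 1 iff [LM > 2]. *)
From HB Require Import structures.
From mathcomp Require Import all_boot all_order all_algebra.
From mathcomp Require Import complex.
From mathcomp Require Import reals.
From mathcomp Require Import zify ring.

Set Implicit Arguments.
Unset Strict Implicit.

Import Order.TTheory GRing.Theory Num.Theory.
Local Open Scope ring_scope.

Lemma mup_gt1 (F : fieldType) (f : {poly F}) z :
  f != 0 -> (1 < mup z f)%N = root f z && root f^`() z.
Proof.
move=> f0; rewrite mup_geq // expr2.
have [/factor_theorem[h ->] | fNz] := boolP (root f z); last first.
  by apply: contraNF fNz => /(dvdp_trans (dvdp_mulIl _ _)); rewrite dvdp_XsubCl.
rewrite dvdp_mul2r ?polyXsubC_eq0 // dvdp_XsubCl derivM derivXsubC mulr1.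
by rewrite /root !hornerE subrr mulr0 add0r.
Qed.

Lemma size_sum_scaleXn (R : nzRingType) (a : nat -> R) N :
  (0 < N)%N -> a N != 0 -> size (\sum_(1 <= k < N.+1) a k *: 'X^k) = N.+1.
Proof.
move=> N_gt0 aN0; set p := \sum_(_ <= _ < _) _.
have coef_p i : p`_i = if (0 < i <= N)%N then a i else 0.
  by rewrite coef_sumMXn big_nat1_eq ltnS.
apply/eqP; rewrite eqn_leq; apply/andP; split.
  by apply/leq_sizeP => i ltNi; rewrite coef_p [(i <= N)%N]leqNgt ltNi andbF.
rewrite ltnNge; apply: contra aN0 => /leq_sizeP/(_ N (leqnn N)).
by rewrite coef_p N_gt0 leqnn => /eqP.
Qed.

Section RamificationOfXOverPoly.

Variables (F : fieldType) (q : {poly F}) (N : nat).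
Hypotheses (size_q : size q = N.+1) (N_gt1 : (1 < N)%N).

Let q_neq0 : q != 0. Proof. by rewrite -size_poly_eq0 size_q. Qed.

Lemma size_X_sub_scale c : c != 0 -> size ('X - c *: q) = N.+1.
Proof.
move=> c0; rewrite addrC size_polyDl size_polyN size_scale // size_q.
by rewrite size_polyX ltnS.
Qed.

Lemma X_sub_scale_neq0 c : 'X - c *: q != 0.
Proof.
have [->|c0] := eqVneq c 0; first by rewrite scale0r subr0 polyX_eq0.
by rewrite -size_poly_eq0 size_X_sub_scale.
Qed.

Lemma horner_deriv_X_sub_scale c z : ('X - c *: q)^`().[z] = 1 - c * q^`().[z].
Proof. by rewrite derivB derivX derivZ !hornerE. Qed.

Lemma ramification_point_root z :
  ramification_point 'X q (Some z) -> root (q - 'X * q^`()) z.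
Proof.
rewrite /root !hornerE.
case=> [[c [/eqP | ord_gt1]] | [_ ord_le]]; first by rewrite (negPf (X_sub_scale_neq0 c)).
- (* The two copies of [mup z ('X - c *: q)] differ in inferred instances,
     so [lia] needs them generalized to one atom. *)
  have : (1 < mup z ('X - c *: q))%N.
    by move: ord_gt1 => /=; move: (mup z _) => m; lia.
  rewrite mup_gt1 ?X_sub_scale_neq0 // /root horner_deriv_X_sub_scale !hornerE.
  case/andP => /eqP root_z /eqP root_dz.
  suff -> : q.[z] - z * q^`().[z] =
      q.[z] * (1 - c * q^`().[z]) - q^`().[z] * (z - c * q.[z]).
    by rewrite root_z root_dz !mulr0 subr0.
  by ring.
- have : (1 < mup z q)%N by move: ord_le => /=; lia.
  by rewrite mup_gt1 // => /andP[/eqP -> /eqP ->]; rewrite mulr0 subr0.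
Qed.

Lemma ramification_point_inftyP : ramification_point 'X q None <-> (2 < N)%N.
Proof.
rewrite /ramification_point /= size_q size_polyX; split.
- case=> [[c [/eqP | ]] | [_]]; first by rewrite (negPf (X_sub_scale_neq0 c)).
    have [->|c0] := eqVneq c 0; first by rewrite scale0r subr0 size_polyX; lia.
    by rewrite size_X_sub_scale // subrr.
  lia.
- by move=> N_gt2; left; exists 0; right; rewrite scale0r subr0 size_polyX; lia.
Qed.

Hypothesis q0_neq0 : q.[0] != 0.

Lemma root_ramification_point z :
  root (q - 'X * q^`()) z -> ramification_point 'X q (Some z).
Proof.
rewrite /root !hornerE subr_eq0 => /eqP qzE.
have [qz0 | qzN0] := eqVneq q.[z] 0.
  have z0 : z != 0 by apply: contraNneq q0_neq0 => z0; move: qz0; rewrite z0 => ->.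
  have dqz0 : q^`().[z] = 0.
    by apply/eqP; move: qzE; rewrite qz0 => /esym/eqP; rewrite mulf_eq0 (negPf z0).
  have : (1 < mup z q)%N by rewrite mup_gt1 // /root qz0 dqz0 eqxx.
  right; split; first by rewrite polyX_eq0.
  by rewrite /= mupNroot ?rootE ?hornerX //; lia.
left; exists (z / q.[z]); right.
rewrite /= [mup z q]mupNroot ?/root ?(negPf qzN0) //.
have : (1 < mup z ('X - (z / q.[z]) *: q))%N.
  rewrite mup_gt1 ?X_sub_scale_neq0 // /root horner_deriv_X_sub_scale !hornerE.
  by rewrite divfK // subrr eqxx /= mulrAC -qzE divff // subrr.
by move: (mup z _) => m; lia.
Qed.

Lemma ramification_point_finiteP z :
  ramification_point 'X q (Some z) <-> root (q - 'X * q^`()) z.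
Proof. by split; [apply: ramification_point_root | apply: root_ramification_point]. Qed.

End RamificationOfXOverPoly.

Theorem lemma7p7 (R : realType) (M L : nat) (g s : nat -> R[i]) (gamma : R[i])
  (hgM : g M != 0) (hsL : s L != 0) (hLM : (1 < L * M)%N) (hgamma : gamma != 0) :
  let G : {poly R[i]} := 1 + \sum_(1 <= k < M.+1) g k *: 'X^k in
  let S : {poly R[i]} := \sum_(1 <= k < L.+1) (k%:R * s k) *: 'X^k in
  let phi : {poly R[i]} := G \Po S - 'X * ((G^`()) \Po S) * S^`() in
  (* X(z) = z / (gamma G(S(z))) as the rational function p/q *)
  let p : {poly R[i]} := 'X in
  let q : {poly R[i]} := gamma *: (G \Po S) in
  ((L * M)%N = 2%N ->
     forall a : P1 R[i], ramification_point p q a <->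
       exists2 z : R[i], a = Some z & root phi z) /\
  ((2 < L * M)%N ->
     forall a : P1 R[i], ramification_point p q a <->
       a = None \/ exists2 z : R[i], a = Some z & root phi z).
Proof.
move=> G S phi p q.
have [L_gt0 M_gt0] : (0 < L)%N /\ (0 < M)%N by move: hLM; rewrite !lt0n; split; lia.
have size_G : size G = M.+1.
  by rewrite /G addrC size_polyDl size_sum_scaleXn // size_poly1.
have size_S : size S = L.+1.
  by rewrite /S size_sum_scaleXn // mulf_neq0 // pnatr_eq0 -lt0n.
have size_q : size q = (L * M).+1.
  have GS0 : G \Po S != 0 by rewrite comp_poly_eq0 ?size_S // -size_poly_eq0 size_G.
  by rewrite /q size_scale // polySpred // size_comp_poly size_G size_S mulnC.
have q0 : q.[0] != 0.
  rewrite /q hornerZ horner_comp [S.[0]]horner_coef0 coef_sumMXn big_nat1_eq /=.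
  by rewrite horner_coef0 /G coefD coef1 coef_sumMXn big_nat1_eq addr0 mulr1.
have rootE_phi z : root (q - 'X * q^`()) z = root phi z.
  by rewrite /q derivZ deriv_comp -scalerAr -scalerBr rootZ // mulrA.
have fin z : ramification_point p q (Some z) <-> root phi z.
  by rewrite -rootE_phi; exact: ramification_point_finiteP size_q hLM q0 z.
have infty := ramification_point_inftyP size_q hLM.
split=> LM_eq [z|]; rewrite /p ?fin ?infty.
- by split=> [|[_ [<-]]]; first exists z.
- by rewrite LM_eq; split=> // [[]].
- by split=> [rz | [// | [_ [<-]]]]; first by right; exists z.
- by split=> _; first left.
Qed.
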